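(* Let $p\ge1$, $q\ge 2$, and let $A_1,\dots,A_q\in\mathbb{R}^{p\times p}$ be symmetric matrices such that, with $A_\eta=\sum_{i=1}^q\eta_iA_i$, one has $A_\eta^3=|\eta|^2A_\eta$ for all $\eta\in\mathbb{R}^q$. Then: (i) there are nonnegative integers $\nu,\mu$ with $2\nu+\mu=p$ such that for every $\eta\in\mathbb{R}^q\setminus\{0\}$ and every $i\in\{1,\dots,q\}$, the matrices $\frac{1}{|\eta|}A_\eta$ and $A_i$ have eigenvalues $1$ and $-1$ each of multiplicity $\nu$ and eigenvalue $0$ of multiplicity $\mu$; (ii) $\operatorname{trace}A_i=0$ for all $i$; (iii) $A_i^3=A_i$ for all $i$; (iv) for any $s,t\in\mathbb{R}^q$ with $\langle s,t\rangle=0$, $A_s^2A_t+A_sA_tA_s+A_tA_s^2=|s|^2A_t$.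
   Context: $|\cdot|$ and $\langle\cdot,\cdot\rangle$ denote the standard Euclidean norm and inner product on $\mathbb{R}^q$. *)

From HB Require Import structures.
From mathcomp Require Import all_boot all_order all_algebra.
From mathcomp Require Import reals.
Set Implicit Arguments. Unset Strict Implicit. Unset Printing Implicit Defensive.
Import Order.TTheory GRing.Theory Num.Theory.
Local Open Scope ring_scope.

Section Defs.
Variable R : realType.

Definition Aeta (p q : nat) (A : 'I_q -> 'M[R]_p) (eta : 'rV[R]_q) : 'M[R]_p :=
  \sum_(i < q) eta 0 i *: A i.

Definition sqnorm (q : nat) (eta : 'rV[R]_q) : R := \sum_(i < q) eta 0 i ^+ 2.

Definition vnorm (q : nat) (eta : 'rV[R]_q) : R := Num.sqrt (sqnorm eta).

Definition dotv (q : nat) (s t : 'rV[R]_q) : R := \sum_(i < q) s 0 i * t 0 i.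

(* The characteristic polynomial of a p x p matrix whose eigenvalues are
   1 and -1 each with multiplicity nu and 0 with multiplicity mu. *)
Definition spec_poly (nu mu : nat) : {poly R} :=
  ('X - 1) ^+ nu * ('X + 1) ^+ nu * 'X ^+ mu.
End Defs.

From HB Require Import structures.
From mathcomp Require Import all_boot all_order all_algebra ssrAC.
From mathcomp Require Import reals ring lra zify.
Import Order.TTheory GRing.Theory Num.Theory.
Local Open Scope ring_scope.
Set Implicit Arguments. Unset Strict Implicit.

(* A real matrix B with B^3 = B is annihilated by X (X - 1) (X + 1), which has
   simple roots, so B is diagonalizable with eigenvalues in {0, 1, -1}, and its
   characteristic polynomial is determined by tr B and tr B^2.  This applies to
   B = A_eta / |eta|, so tr A_eta lies in |eta| Z.  For e_i and e_i +- e_j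
   (of norm sqrt 2) this makes tr A_i +- tr A_j integers that are also sqrt 2
   times integers; by the irrationality of sqrt 2 both vanish.
   Comparing the cube identity at s + t and s - t yields (iv).  Multiplying
   (iv) by A_t and taking traces gives |s|^2 tr A_t^2 = |t|^2 tr A_s^2 for
   orthogonal s, t, whence tr A_eta^2 = |eta|^2 tr A_1^2.  So every
   A_eta / |eta| has trace 0 and the same tr B^2, hence the same spectrum. *)

Lemma char_poly_conj (F : fieldType) n (P B : 'M[F]_n) : P \in unitmx ->
  char_poly (invmx P *m B *m P) = char_poly B.
Proof.
move=> Pu; rewrite /char_poly /char_poly_mx.
set Qi := map_mx (@polyC F) (invmx P); set Q := map_mx (@polyC F) P.
have QiQ : Qi *m Q = 1%:M by rewrite -map_mxM mulVmx // map_mx1.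
have -> : 'X%:M - map_mx (@polyC F) (invmx P *m B *m P) =
          Qi *m ('X%:M - map_mx (@polyC F) B) *m Q.
  rewrite !map_mxM -/Qi -/Q mulmxBr mulmxBl scalar_mxC.
  by rewrite -[('X%:M *m Qi) *m Q]mulmxA QiQ mulmx1.
by rewrite !det_mulmx mulrAC -det_mulmx QiQ det1 mul1r.
Qed.

Lemma mxtrace_conj (F : fieldType) n (P B : 'M[F]_n) : P \in unitmx ->
  \tr (invmx P *m B *m P) = \tr B.
Proof. by move=> Pu; rewrite mxtrace_mulC mulmxA mulmxV // mul1mx. Qed.

Section CubeIdentity.
Variable F : realFieldType.

Lemma cube_id_values (x : F) : x * (x * x) = x -> [\/ x = 0, x = 1 | x = -1].
Proof.
move=> x3; have : x * (x - 1) * (x + 1) = 0.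
  by rewrite -[0](subrr x) -[X in X - x]x3; ring.
move/eqP; rewrite !mulf_eq0 subr_eq0 addr_eq0 => /orP[/orP[]|] /eqP ->;
  by [constructor 1 | constructor 2 | constructor 3].
Qed.

Lemma prod_XsubC_signs n (d : 'I_n -> F) :
  (forall i, [\/ d i = 0, d i = 1 | d i = -1]) ->
  exists a b c : nat, [/\ (a + b + c = n)%N,
    \prod_(i < n) ('X - (d i)%:P) = ('X - 1) ^+ a * ('X + 1) ^+ b * 'X ^+ c,
    \sum_(i < n) d i = a%:R - b%:R & \sum_(i < n) d i ^+ 2 = a%:R + b%:R].
Proof.
elim: n d => [|n IH] d d_sign.
  by exists 0%N, 0%N, 0%N; rewrite !big_ord0 !expr0 !mulr1 subrr addr0.
rewrite !big_ord_recr /=.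
have [a [b [c [abc -> -> ->]]]] := IH _ (fun i => d_sign (widen_ord (leqnSn n) i)).
case: (d_sign ord_max) => ->.
- exists a, b, c.+1; rewrite addnS abc polyC0 subr0 (exprS 'X) expr0n !addr0.
  by split => //; ring.
- exists a.+1, b, c; rewrite polyC1 (exprS ('X - 1)) expr1n -!natr1.
  by split; [lia | ring..].
- exists a, b.+1, c; rewrite polyCN polyC1 opprK (exprS ('X + 1)) sqrrN expr1n.
  by rewrite -!natr1; split; [lia | ring..].
Qed.

Lemma cube_id_diagonalizable n (B : 'M[F]_n.+1) :
  B *m B *m B = B -> diagonalizable B.
Proof.
move=> B3; apply/diagonalizableP; exists [:: 1; -1; 0].
  rewrite /= !inE !negb_or !andbT -andbA.
  by apply/and3P; split; apply/eqP => h; clear -h; lra.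
apply: mxminpoly_min.
rewrite !big_cons big_nil !rmorphM /= !rmorphB /= !horner_mx_X !horner_mx_C.
rewrite !rmorph1 raddfN raddf0 /= subr0 opprK mulr1 mulrBl mulrDl !mul1r mulrDr.
by rewrite mulrA -!mulmxE B3 (addrC (B *m B)) subrr.
Qed.

Lemma cube_id_spectrum n (B : 'M[F]_n) : B *m B *m B = B ->
  exists a b c : nat, [/\ (a + b + c = n)%N,
    char_poly B = ('X - 1) ^+ a * ('X + 1) ^+ b * 'X ^+ c,
    \tr B = a%:R - b%:R & \tr (B *m B) = a%:R + b%:R].
Proof.
case: n B => [|n] B B3.
  exists 0%N, 0%N, 0%N; rewrite /char_poly det_mx00 /mxtrace !big_ord0.
  by rewrite !expr0 !mulr1 subrr addr0.
have [P Pu /diagonalizable_forPex [d /(simmxP Pu) PB]] := cube_id_diagonalizable B3.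
set D := diag_mx d in PB.
have BE : B = invmx P *m D *m P by rewrite -mulmxA -PB mulmxA mulVmx // mul1mx.
have BBE : B *m B = invmx P *m (D *m D) *m P by rewrite BE !mulmxA mulmxK.
have D3 : D *m D *m D = D.
  rewrite -[D](mulmxK Pu) -PB !mulmxA !mulmxKV //.
  by rewrite -(mulmxA P B B) -(mulmxA P (B *m B) B) B3.
have d_sign i : [\/ d 0 i = 0, d 0 i = 1 | d 0 i = -1].
  apply: cube_id_values; have := congr1 (fun X : 'M_n.+1 => X i i) D3.
  by rewrite -mulmxA !mul_diag_mx !mxE eqxx mulr1n.
have [a [b [c [abc prodE sumE sum2E]]]] := prod_XsubC_signs d_sign.
exists a, b, c; split => //.
- rewrite BE char_poly_conj // char_poly_trig ?diag_mx_is_trig // -prodE.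
  by apply: eq_bigr => i _; rewrite mxE eqxx mulr1n.
- by rewrite BE mxtrace_conj // mxtrace_diag.
- rewrite BBE mxtrace_conj // -sum2E; apply: eq_bigr => i _.
  by rewrite mul_diag_mx !mxE eqxx mulr1n.
Qed.

End CubeIdentity.

Lemma sqrn_eq_double_eq0 (m k : nat) : (m ^ 2 = 2 * k ^ 2)%N -> m = 0%N.
Proof.
move=> mk; case: (posnP k) => [k0 | k_gt0].
  by apply/eqP; move: (expn_eq0 m 2); rewrite mk k0 andbT => <-.
have := congr1 (logn 2) mk.
by rewrite lognM ?expn_gt0 ?k_gt0 // !lognX (logn_prime 2 (isT : prime 2)); lia.
Qed.

Lemma sqr_intr_eq_double_eq0 (R : numDomainType) (m k : int) :
  (m%:~R : R) ^+ 2 = 2 * k%:~R ^+ 2 -> m = 0.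
Proof.
rewrite -!rmorphXn -[2]/(2%:~R) -rmorphM => /intr_inj mk.
apply/eqP; rewrite -absz_eq0; apply/eqP/(@sqrn_eq_double_eq0 _ `|k|).
by have := congr1 absz mk; rewrite abszM !abszX.
Qed.

Lemma cube_id_char_poly (R : realType) n (B : 'M[R]_n) nu mu :
  (2 * nu + mu = n)%N -> B *m B *m B = B -> \tr B = 0 -> \tr (B *m B) = (2 * nu)%:R ->
  char_poly B = spec_poly R nu mu.
Proof.
move=> numu B3 trB trB2; have [a [b [c [abc -> trE tr2E]]]] := cube_id_spectrum B3.
have ab : a = b by apply/eqP; rewrite -(eqr_nat R) -subr_eq0 -trE trB.
have anu : a = nu.
  by move: tr2E; rewrite trB2 -natrD => /eqP; rewrite eqr_nat => /eqP; lia.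
by rewrite /spec_poly -ab anu (_ : c = mu) //; lia.
Qed.

Lemma cubeD_expand (Rg : pzRingType) (S T : Rg) :
  (S + T) * (S + T) * (S + T) = S * S * S + (S * S * T + S * T * S + T * S * S)
    + (S * T * T + T * S * T + T * T * S) + T * T * T.
Proof. by rewrite !(mulrDl, mulrDr) !addrA [LHS](ACl (1*5*2*3*6*7*4*8)). Qed.

Lemma cubeD_sub_cubeB (Rg : pzRingType) (S T : Rg) :
  (S + T) * (S + T) * (S + T) - (S - T) * (S - T) * (S - T)
    = (S * S * T + S * T * S + T * S * S + T * T * T) *+ 2.
Proof.
rewrite !cubeD_expand !(mulrN, mulNr) !opprK -!opprD.
move: (S * S * S) (S * S * T + _ + _) (S * T * T + _ + _) (T * T * T) => a x y t.
rewrite !opprD !opprK addrACA (addrACA (a + x)) (addrACA a).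
by rewrite subrr add0r subrr addr0 mulrnDl !mulr2n.
Qed.

Section RowVectors.
Variables (R : realType) (q : nat).
Implicit Types (s t : 'rV[R]_q) (i j : 'I_q).

Lemma dotvC s t : dotv s t = dotv t s.
Proof. by apply: eq_bigr => i _; rewrite mulrC. Qed.

Lemma dotvDl s1 s2 t : dotv (s1 + s2) t = dotv s1 t + dotv s2 t.
Proof. by rewrite /dotv -big_split; apply: eq_bigr => i _; rewrite mxE mulrDl. Qed.

Lemma dotvDr s t1 t2 : dotv s (t1 + t2) = dotv s t1 + dotv s t2.
Proof. by rewrite dotvC dotvDl !(dotvC s). Qed.

Lemma dotvNl s t : dotv (- s) t = - dotv s t.
Proof. by rewrite /dotv -sumrN; apply: eq_bigr => i _; rewrite mxE mulNr. Qed.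

Lemma dotvNr s t : dotv s (- t) = - dotv s t.
Proof. by rewrite dotvC dotvNl dotvC. Qed.

Lemma dotv_delta i j : dotv 'e_i ('e_j : 'rV[R]_q) = (i == j)%:R.
Proof.
rewrite /dotv (bigD1 i) //= !mxE !eqxx mul1r big1 ?addr0 1?eq_sym // => k /negPf ki.
by rewrite !mxE ki andbF mul0r.
Qed.

Lemma sqnormE s : sqnorm s = dotv s s.
Proof. by apply: eq_bigr => i _; rewrite expr2. Qed.

Lemma sqnorm_ge0 s : 0 <= sqnorm s.
Proof. by apply: sumr_ge0 => i _; apply: sqr_ge0. Qed.

Lemma sqnorm_eq0 s : (sqnorm s == 0) = (s == 0).
Proof.
apply/idP/eqP => [/eqP s0|->]; last by rewrite /sqnorm big1 // => i _; rewrite mxE expr0n.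
apply/matrixP => i j; rewrite mxE ord1.
have /eqP := psumr_eq0P (fun k _ => sqr_ge0 (s 0 k)) s0 (i := j) isT.
by rewrite sqrf_eq0 => /eqP.
Qed.

Lemma sqnorm_delta i : sqnorm ('e_i : 'rV[R]_q) = 1.
Proof. by rewrite sqnormE dotv_delta eqxx. Qed.

Lemma sqnorm_orthD s t : dotv s t = 0 -> sqnorm (s + t) = sqnorm s + sqnorm t.
Proof. by move=> st; rewrite !sqnormE dotvDl !dotvDr (dotvC t s) st addr0 add0r. Qed.

Lemma sqnorm_orthB s t : dotv s t = 0 -> sqnorm (s - t) = sqnorm s + sqnorm t.
Proof.
by move=> st; rewrite sqnorm_orthD ?dotvNr ?st ?oppr0 // !sqnormE dotvNl dotvNr opprK.
Qed.

Lemma dotv_deltaDB i j :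
  dotv ('e_i + 'e_j) ('e_i - 'e_j : 'rV[R]_q) = 0.
Proof.
rewrite dotvDl !dotvDr !dotvNr !dotv_delta !eqxx (eq_sym j i).
by rewrite addrA subrK subrr.
Qed.

Lemma vnorm_sqr s : vnorm s ^+ 2 = sqnorm s.
Proof. by rewrite sqr_sqrtr // sqnorm_ge0. Qed.

Lemma vnorm_eq0 s : (vnorm s == 0) = (s == 0).
Proof. by rewrite -sqnorm_eq0 -vnorm_sqr sqrf_eq0. Qed.

Lemma vnorm_delta i : vnorm ('e_i : 'rV[R]_q) = 1.
Proof. by rewrite /vnorm sqnorm_delta sqrtr1. Qed.

Lemma sqnorm_deltaD i j : i != j -> sqnorm ('e_i + 'e_j : 'rV[R]_q) = 2.
Proof. by move=> ij; rewrite sqnorm_orthD ?dotv_delta ?(negPf ij) // !sqnorm_delta. Qed.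

Lemma sqnorm_deltaB i j : i != j -> sqnorm ('e_i - 'e_j : 'rV[R]_q) = 2.
Proof. by move=> ij; rewrite sqnorm_orthB ?dotv_delta ?(negPf ij) // !sqnorm_delta. Qed.

End RowVectors.

Lemma mxtrace_rot4 (Rg : comPzRingType) n (X1 X2 X3 X4 : 'M[Rg]_n) :
  \tr (X1 *m X2 *m X3 *m X4) = \tr (X2 *m X3 *m X4 *m X1).
Proof. by rewrite -!mulmxA mxtrace_mulC !mulmxA. Qed.

Section CubicPencil.
Variables (R : realType) (p q : nat) (A : 'I_q -> 'M[R]_p).
Implicit Types (s t eta : 'rV[R]_q) (i j : 'I_q).

Local Notation nAeta eta := ((vnorm eta)^-1 *: Aeta A eta).

Lemma AetaD s t : Aeta A (s + t) = Aeta A s + Aeta A t.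
Proof. by rewrite /Aeta -big_split; apply: eq_bigr => i _; rewrite mxE scalerDl. Qed.

Lemma AetaB s t : Aeta A (s - t) = Aeta A s - Aeta A t.
Proof. by rewrite /Aeta -sumrB; apply: eq_bigr => i _; rewrite !mxE scalerBl. Qed.

Lemma Aeta_delta i : Aeta A 'e_i = A i.
Proof.
rewrite /Aeta (bigD1 i) //= mxE !eqxx scale1r big1 ?addr0 // => j /negPf ji.
by rewrite mxE ji andbF scale0r.
Qed.

Lemma nAeta_delta i : nAeta 'e_i = A i.
Proof. by rewrite /vnorm sqnorm_delta sqrtr1 invr1 scale1r Aeta_delta. Qed.

Lemma mxtrace_Aeta eta : \tr (Aeta A eta) = \sum_i eta 0 i * \tr (A i).
Proof. by rewrite /Aeta raddf_sum; apply: eq_bigr => i _; apply: mxtraceZ. Qed.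

Hypothesis Aeta_cube : forall eta,
  Aeta A eta *m Aeta A eta *m Aeta A eta = sqnorm eta *: Aeta A eta.

Lemma A_cube i : A i *m A i *m A i = A i.
Proof. by have := Aeta_cube 'e_i; rewrite Aeta_delta sqnorm_delta scale1r. Qed.

Lemma nAeta_cube eta : eta != 0 -> nAeta eta *m nAeta eta *m nAeta eta = nAeta eta.
Proof.
move=> eta0; rewrite -!scalemxAl -!scalemxAr -!scalemxAl !scalerA Aeta_cube scalerA.
rewrite -vnorm_sqr.
have v0 : vnorm eta != 0 by rewrite vnorm_eq0.
by congr (_ *: _); field.
Qed.

Lemma Aeta_polar s t : dotv s t = 0 ->
  Aeta A s *m Aeta A s *m Aeta A t + Aeta A s *m Aeta A t *m Aeta A s
    + Aeta A t *m Aeta A s *m Aeta A s = sqnorm s *: Aeta A t.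
Proof.
move=> st; have := cubeD_sub_cubeB (Aeta A s) (Aeta A t); rewrite -!mulmxE.
rewrite -AetaD -AetaB !Aeta_cube sqnorm_orthD // sqnorm_orthB // AetaD AetaB.
rewrite -scalerBr opprB (addrC (_ + _)) addrA subrK -mulr2n -scalerMnr -!scaler_nat.
have two0 : 2%:R != 0 :> R by rewrite pnatr_eq0.
move/(scalerI two0)/esym/(canRL (addrK _)) ->.
by rewrite -scalerBl addrK.
Qed.

Lemma mxtrace_Aeta_sqr_orth s t : dotv s t = 0 ->
  sqnorm s * \tr (Aeta A t *m Aeta A t) = sqnorm t * \tr (Aeta A s *m Aeta A s).
Proof.
move=> st; have ts : dotv t s = 0 by rewrite dotvC.
have := congr1 (fun M => \tr (M *m Aeta A t)) (Aeta_polar st).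
have := congr1 (fun M => \tr (M *m Aeta A s)) (Aeta_polar ts).
rewrite /= !mulmxDl !mxtraceD -!scalemxAl !mxtraceZ.
set S := Aeta A s; set T := Aeta A t => <- <-.
(* By cyclicity of the trace both sides equal 2 tr (S^2 T^2) + tr ((S T)^2). *)
have cyc := @mxtrace_rot4 R p.
have TSST : \tr (T *m S *m S *m T) = \tr (S *m S *m T *m T) by rewrite cyc.
have STTS : \tr (S *m T *m T *m S) = \tr (S *m S *m T *m T) by rewrite cyc cyc cyc.
have TTSS : \tr (T *m T *m S *m S) = \tr (S *m S *m T *m T) by rewrite cyc cyc.
have TSTS : \tr (T *m S *m T *m S) = \tr (S *m T *m S *m T) by rewrite cyc.
by rewrite TSST STTS TTSS TSTS.
Qed.

Lemma mxtrace_A_sqr i j : \tr (A i *m A i) = \tr (A j *m A j).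
Proof.
have [-> // | ij] := eqVneq i j.
have := @mxtrace_Aeta_sqr_orth 'e_i 'e_j.
by rewrite !sqnorm_delta !Aeta_delta !mul1r dotv_delta (negPf ij) => ->.
Qed.

Lemma mxtrace_A_mul i j : i != j -> \tr (A i *m A j) = 0.
Proof.
move=> ij; have := mxtrace_Aeta_sqr_orth (dotv_deltaDB _ i j).
rewrite AetaB AetaD !Aeta_delta sqnorm_deltaD // sqnorm_deltaB //.
rewrite mulmxBl !mulmxBr mulmxDl !mulmxDr !mxtraceD !raddfB !raddfN /=.
by rewrite (mxtrace_mulC (A j)) (mxtrace_A_sqr j i); lra.
Qed.

Lemma mxtrace_Aeta_sqr eta i :
  \tr (Aeta A eta *m Aeta A eta) = sqnorm eta * \tr (A i *m A i).
Proof.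
rewrite /Aeta mulmx_suml raddf_sum /sqnorm mulr_suml; apply: eq_bigr => j _.
rewrite mulmx_sumr raddf_sum (bigD1 j) //= big1 ?addr0 => [|k kj].
  by rewrite -scalemxAl -scalemxAr !mxtraceZ (mxtrace_A_sqr j i) mulrA expr2.
by rewrite -scalemxAl -scalemxAr !mxtraceZ mxtrace_A_mul ?mulr0 // eq_sym.
Qed.

Lemma mxtrace_nAeta_sqr eta i : eta != 0 ->
  \tr (nAeta eta *m nAeta eta) = \tr (A i *m A i).
Proof.
move=> eta0; have v0 : vnorm eta != 0 by rewrite vnorm_eq0.
rewrite -scalemxAl -scalemxAr !mxtraceZ (mxtrace_Aeta_sqr _ i) -vnorm_sqr.
by field.
Qed.

Lemma mxtrace_Aeta_int eta : eta != 0 ->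
  exists z : int, \tr (Aeta A eta) = vnorm eta * z%:~R.
Proof.
move=> eta0; have v0 : vnorm eta != 0 by rewrite vnorm_eq0.
have [a [b [c [_ _ trB _]]]] := cube_id_spectrum (nAeta_cube eta0).
exists (a%:Z - b%:Z); rewrite mxtraceZ in trB.
rewrite intrB -[X in _ = _ * X]/(a%:R - b%:R) -trB.
by field.
Qed.

Lemma mxtrace_A_int i : exists z : int, \tr (A i) = z%:~R.
Proof.
have [|z trz] := @mxtrace_Aeta_int 'e_i.
  by rewrite -sqnorm_eq0 sqnorm_delta oner_eq0.
by exists z; rewrite -Aeta_delta trz vnorm_delta mul1r.
Qed.

Lemma mxtrace_Aeta_sqnorm2 eta (z : int) :
  sqnorm eta = 2 -> \tr (Aeta A eta) = z%:~R -> z = 0.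
Proof.
move=> eta2 trz; have eta0 : eta != 0 by rewrite -sqnorm_eq0 eta2 pnatr_eq0.
have [w trw] := mxtrace_Aeta_int eta0.
by apply: (@sqr_intr_eq_double_eq0 R _ w); rewrite -trz trw exprMn vnorm_sqr eta2.
Qed.

Hypothesis two_le_q : (2 <= q)%N.

Lemma mxtrace_A_eq0 i : \tr (A i) = 0.
Proof.
have [j ij] : exists j, i != j.
  have [->|] := eqVneq i (Ordinal two_le_q); last by exists (Ordinal two_le_q).
  by exists (Ordinal (ltnW two_le_q)).
have [zi trAi] := mxtrace_A_int i; have [zj trAj] := mxtrace_A_int j.
have := @mxtrace_Aeta_sqnorm2 _ (zi + zj) (sqnorm_deltaD _ ij).
have := @mxtrace_Aeta_sqnorm2 _ (zi - zj) (sqnorm_deltaB _ ij).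
rewrite AetaB AetaD !Aeta_delta !mxtraceD raddfN /= trAi trAj intrB intrD.
by move=> /(_ erefl) zB /(_ erefl) zD; rewrite (_ : zi = 0) //; lia.
Qed.

Lemma char_poly_nAeta : exists nu mu, (2 * nu + mu = p)%N /\
  forall eta, eta != 0 -> char_poly (nAeta eta) = spec_poly R nu mu.
Proof.
pose i0 := Ordinal (ltnW two_le_q).
have [nu [nu' [mu [numu _ trA0 trA02]]]] := cube_id_spectrum (A_cube i0).
have nu'E : nu' = nu.
  by apply/eqP; rewrite -(eqr_nat R) eq_sym -subr_eq0 -trA0 mxtrace_A_eq0.
exists nu, mu; split; first by rewrite -numu nu'E; lia.
move=> eta eta0; apply: cube_id_char_poly (nAeta_cube eta0) _ _.
- by rewrite -numu nu'E; lia.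
- by rewrite mxtraceZ mxtrace_Aeta big1 ?mulr0 // => i _; rewrite mxtrace_A_eq0 mulr0.
- by rewrite (mxtrace_nAeta_sqr i0 eta0) trA02 nu'E -natrD addnn -mul2n.
Qed.

End CubicPencil.

Theorem lemma3p1 (R : realType) (p q : nat) (A : 'I_q -> 'M[R]_p) :
  (1 <= p)%N -> (2 <= q)%N ->
  (forall i, (A i)^T = A i) ->
  (forall eta : 'rV[R]_q,
      Aeta A eta *m Aeta A eta *m Aeta A eta = sqnorm eta *: Aeta A eta) ->
  [/\ (exists nu mu : nat, (2 * nu + mu = p)%N /\
         (forall eta : 'rV[R]_q, eta != 0 ->
            char_poly ((vnorm eta)^-1 *: Aeta A eta) = spec_poly R nu mu) /\
         (forall i, char_poly (A i) = spec_poly R nu mu)),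
      (forall i, \tr (A i) = 0),
      (forall i, A i *m A i *m A i = A i) &
      (forall s t : 'rV[R]_q, dotv s t = 0 ->
         Aeta A s *m Aeta A s *m Aeta A t + Aeta A s *m Aeta A t *m Aeta A s
         + Aeta A t *m Aeta A s *m Aeta A s = sqnorm s *: Aeta A t)].
Proof.
move=> _ two_le_q _ Aeta_cube.
have [nu [mu [numu char_polyE]]] := char_poly_nAeta Aeta_cube two_le_q.
split => [|i|i|s t]; last exact: Aeta_polar.
- exists nu, mu; split; [done | split => // i].
  by rewrite -nAeta_delta char_polyE // -sqnorm_eq0 sqnorm_delta oner_eq0.
- exact: mxtrace_A_eq0.
- exact: A_cube.
Qed.
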